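(* Let $\mathbf G=(G,\le,\cdot,/,0,1)$ be a left-residuated po-groupoid satisfying the double negation law $\neg\neg x=x$ and the equation $(x\to y)\to y=(y\to x)\to x$ for all $x,y\in G$. Then for all $x,y,z\in G$: (a) $1\to x=x$; (b) $x\le y\to x$; (c) $x\le y$ iff $\neg y\le\neg x$ iff $x\to y=1$; (d) if $x\le y$ then $y\to z\le x\to z$.
   Context: A (bounded integral) left-residuated po-groupoid is a structure $\mathbf G=(G,\le,\cdot,/,0,1)$ where $(G,\le,0,1)$ is a bounded poset with least element $0$ and greatest element $1$, $\cdot$ is a binary operation on $G$ with $1\cdot x=x\cdot 1=x$ for all $x$ (no associativity, commutativity or monotonicity is assumed), and $/$ is a binary operation on $G$ satisfying the left residuation law: for all $x,y,z\in G$, $x\cdot y\le z\iff x\le z/y$. The negation is defined by $\neg x:=0/x$ and the implication by $x\to y:=\neg x/\neg y$. *)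

Record LRPOGroupoid := {
  carrier :> Type;
  le : carrier -> carrier -> Prop;
  mul : carrier -> carrier -> carrier;
  rdiv : carrier -> carrier -> carrier;
  zero : carrier;
  one : carrier;
  le_refl : forall x, le x x;
  le_antisym : forall x y, le x y -> le y x -> x = y;
  le_trans : forall x y z, le x y -> le y z -> le x z;
  zero_least : forall x, le zero x;
  one_greatest : forall x, le x one;
  mul_one_l : forall x, mul one x = x;
  mul_one_r : forall x, mul x one = x;
  residuation : forall x y z, le (mul x y) z <-> le x (rdiv z y)
}.

Arguments le {l} x y.
Arguments mul {l} x y.
Arguments rdiv {l} x y.
Arguments zero {l}.
Arguments one {l}.

Definition neg {G : LRPOGroupoid} (x : G) : G := rdiv zero x.
Definition imp {G : LRPOGroupoid} (x y : G) : G := rdiv (neg x) (neg y).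


(* Everything except the antitonicity of negation holds in any left-residuated
   po-groupoid, once [x] is replaced by [neg (neg x)].  Antitonicity cannot come
   from the residuation law alone, since multiplication need not be monotone;
   it comes from the equation instead: if [x -> y = 1] then
   [y = 1 -> y = (x -> y) -> y = (y -> x) -> x], which lies above [x]. *)

Section Residuation.
Variable G : LRPOGroupoid.
Implicit Types x y z : G.

Lemma rdiv_eq_one y z : rdiv z y = one <-> le y z.
Proof.
  pose proof (residuation G one y z) as R; rewrite mul_one_l in R; split.
  - intros E; apply R; rewrite E; apply le_refl.
  - intros H; apply le_antisym; [apply one_greatest | now apply R].
Qed.

Lemma mul_rdivK x y : le (mul (rdiv x y) y) x.
Proof. apply residuation, le_refl. Qed.

Lemma rdiv_le2l x y z : le x y -> le (rdiv x z) (rdiv y z).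
Proof.
  intros H; apply residuation, (le_trans G _ x); [apply mul_rdivK | exact H].
Qed.

Lemma neg_one : neg (one : G) = zero.
Proof.
  apply le_antisym; [|apply zero_least].
  rewrite <- (mul_one_r G (neg one)); apply mul_rdivK.
Qed.

Lemma imp_one_l x : imp one x = neg (neg x).
Proof. unfold imp; now rewrite neg_one. Qed.

Lemma negK_le_imp x y : le (neg (neg x)) (imp y x).
Proof.
  apply residuation, (le_trans G _ zero); [apply mul_rdivK | apply zero_least].
Qed.

Lemma imp_eq_one x y : imp x y = one <-> le (neg y) (neg x).
Proof. apply rdiv_eq_one. Qed.

Lemma imp_le2l x y z : le (neg y) (neg x) -> le (imp y z) (imp x z).
Proof. apply rdiv_le2l. Qed.

End Residuation.

Section DoubleNegation.
Variable G : LRPOGroupoid.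
Implicit Types x y z : G.
Hypothesis negK : forall x : G, neg (neg x) = x.
Hypothesis imp_impC : forall x y : G, imp (imp x y) y = imp (imp y x) x.

Lemma imp_one_l_negK x : imp one x = x.
Proof. now rewrite imp_one_l. Qed.

Lemma le_imp_negK x y : le x (imp y x).
Proof. pattern x at 1; rewrite <- negK; apply negK_le_imp. Qed.

Lemma le_of_imp_eq_one x y : imp x y = one -> le x y.
Proof.
  intros E.
  assert (Ey : imp (imp y x) x = y) by now rewrite <- imp_impC, E, imp_one_l_negK.
  rewrite <- Ey; apply le_imp_negK.
Qed.

Lemma le_neg2 x y : le x y <-> le (neg y) (neg x).
Proof.
  split; intros H; apply le_of_imp_eq_one, imp_eq_one; [now rewrite !negK | exact H].
Qed.

End DoubleNegation.

Theorem lemma3 (G : LRPOGroupoid)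
  (dneg : forall x : G, neg (neg x) = x)
  (hyp : forall x y : G, imp (imp x y) y = imp (imp y x) x) :
  forall x y z : G,
    imp one x = x /\
    le x (imp y x) /\
    ((le x y <-> le (neg y) (neg x)) /\ (le (neg y) (neg x) <-> imp x y = one)) /\
    (le x y -> le (imp y z) (imp x z)).
Proof.
  intros x y z; split; [|split; [|split; [split|]]].
  - apply imp_one_l_negK, dneg.
  - apply le_imp_negK, dneg.
  - exact (le_neg2 G dneg hyp x y).
  - apply iff_sym, imp_eq_one.
  - intros H; apply imp_le2l, (le_neg2 G dneg hyp x y), H.
Qed.
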